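(* Let $\lambda$ be a partition with exactly two parts. Then $C_\lambda(q,t)=C_\lambda(t,q)$.
   Context: For a vector $\vec{k}=(k_1,\dots,k_n)$ of positive integers, $\lambda(\vec{k})$ denotes the partition obtained by sorting its entries decreasingly, and $|\vec{k}|=\sum k_i$. A $\vec{k}$-Dyck path is a word $D=\sigma_1\cdots\sigma_N$, $N=|\vec{k}|+n$, with $n$ red arrows and $|\vec{k}|$ blue arrows $W$, the $j$-th red arrow from the left being $S^{k_j}$ of value $k_j$, each $W$ of value $-1$; ranks $r_1=0$, $r_{m+1}=r_m+(\text{value of }\sigma_m)$ must all be $\ge0$. Starting rank $r(\sigma_m)=r_m$, end rank $\dot r(\sigma_m)=r_{m+1}$; $A<B$ means $A$ is left of $B$. $\mathcal{D}_{\vec{k}}$ is the set of $\vec{k}$-Dyck paths. $\operatorname{area}(D)=\sum_S r(S)$ over red arrows $S$. $\operatorname{dinv}(D)$ = (number of pairs (blue $W$, red $S$) with $W<S$ and $W$ sweeping $S$, i.e. $W$ meets $S$ when moved right past $S$ along a line of slope $0<\epsilon\ll1$, equivalently $r(S)\le r(W)\le\dot r(S)$) $+\sum_{S_i<S_j}\chi(r(S_i)\ge r(S_j)\ \&\ \dot r(S_j)>\dot r(S_i))(\dot r(S_j)-\dot r(S_i))+\sum_{S_i<S_j}\chi(r(S_i)<r(S_j)\ \&\ \dot r(S_j)<\dot r(S_i))(\dot r(S_i)-\dot r(S_j))$ over pairs of red arrows. For a partition $\lambda$, $C_\lambda(q,t)=\sum_{\vec{k}:\ \lambda(\vec{k})=\lambda}\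 \sum_{D\in\mathcal{D}_{\vec{k}}} q^{\operatorname{dinv}(D)}t^{\operatorname{area}(D)}$, the outer sum over all vectors $\vec{k}$ whose entries rearrange to $\lambda$. *)

From mathcomp Require Import all_boot all_order all_algebra.
Set Implicit Arguments. Unset Strict Implicit. Unset Printing Implicit Defensive.
Import Order.TTheory GRing.Theory Num.Theory.

(* A word is a seq bool: true = red arrow S, false = blue arrow W.
   Positions are indexed 0 .. N-1. *)

Fixpoint arrow_vals (k : seq nat) (w : seq bool) : seq int :=
  match w with
  | [::] => [::]
  | b :: w' => if b then (Posz (head 0%N k)) :: arrow_vals (behead k) w'
               else (-1)%R :: arrow_vals k w'
  end.

(* ranks r_1, ..., r_{N+1} (stored at indices 0 .. N) *)
Definition ranks (k : seq nat) (w : seq bool) : seq int :=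
  0%R :: scanl (fun a b => (a + b)%R) 0%R (arrow_vals k w).

Definition srank k w (m : nat) : int := nth 0%R (ranks k w) m.
Definition erank k w (m : nat) : int := nth 0%R (ranks k w) m.+1.
Definition is_red (w : seq bool) (m : nat) : bool := nth false w m.

Definition is_dyck (k : seq nat) (w : seq bool) : bool :=
  [&& size w == (sumn k + size k)%N, count id w == size k
    & all (fun r : int => (0 <= r)%R) (ranks k w)].

Fixpoint all_words (N : nat) : seq (seq bool) :=
  if N is N'.+1 then [seq b :: u | b <- [:: true; false], u <- all_words N']
  else [:: [::]].

Definition dyck_paths (k : seq nat) : seq (seq bool) :=
  [seq w <- all_words (sumn k + size k) | is_dyck k w].

Definition area (k : seq nat) (w : seq bool) : nat :=
  \sum_(m <- iota 0 (size w) | is_red w m) `|srank k w m|%N.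

Definition dinv (k : seq nat) (w : seq bool) : nat :=
  let N := size w in
  (\sum_(i <- iota 0 N) \sum_(j <- iota 0 N)
     [&& ~~ is_red w i, is_red w j, (i < j)%N,
         (srank k w j <= srank k w i)%R & (srank k w i <= erank k w j)%R]
   + \sum_(i <- iota 0 N) \sum_(j <- iota 0 N |
       [&& is_red w i, is_red w j, (i < j)%N,
           (srank k w j <= srank k w i)%R & (erank k w i < erank k w j)%R])
       `|erank k w j - erank k w i|%N
   + \sum_(i <- iota 0 N) \sum_(j <- iota 0 N |
       [&& is_red w i, is_red w j, (i < j)%N,
           (srank k w i < srank k w j)%R & (erank k w j < erank k w i)%R])
       `|erank k w i - erank k w j|%N)%N.

(* C_lambda(q,t), evaluated in an arbitrary commutative ring; the outer sum
   runs over the distinct rearrangements of lambda *)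
Definition C_lam (R : comNzRingType) (lam : seq nat) (q t : R) : R :=
  (\sum_(k <- permutations lam) \sum_(w <- dyck_paths k)
      q ^+ dinv k w * t ^+ area k w)%R.

Definition is_partition (lam : seq nat) : bool :=
  sorted geq lam && all (fun x => 0 < x)%N lam.

From mathcomp Require Import all_boot all_order all_algebra.
From mathcomp Require Import zify.
Set Implicit Arguments. Unset Strict Implicit. Unset Printing Implicit Defensive.
Import Order.TTheory GRing.Theory Num.Theory.

(* A (k1,k2)-Dyck path must open with its first red arrow, so it is
   S^k1 W^i S^k2 W^(k1+k2-i) for some 0 <= i <= k1, of area k1 - i.  The i
   blue arrows in the middle start at ranks k1, ..., k1-i+1 and min(i,k2) of
   them sweep the second red arrow; the pair of red arrows adds i - k2 when
   k2 < i < k1 and k2 - k1 when i = k1 < k2.  So dinv is i for i < k1 and k2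
   for i = k1, and the (k1,k2)-paths contribute h_k1(q,t) - q^k1 + q^k2, where
   h_n(q,t) = sum_(i <= n) q^i t^(n-i).  Over the two rearrangements of
   (a,b) the corrections cancel, leaving h_a + h_b (or h_a if a = b), which is
   symmetric in q and t. *)

Lemma mem_all_words (w : seq bool) : w \in all_words (size w).
Proof.
elim: w => //= b w IH.
by rewrite !mem_cat; case: b; rewrite (map_f (cons _)) ?orbT.
Qed.

Lemma all_words_uniq N : uniq (all_words N).
Proof.
elim: N => //= N IH.
rewrite cats0 cat_uniq !map_inj_uniq ?IH //; try by move=> x y [].
rewrite andbT; apply/hasPn => x /mapP [u _ ->]; apply/mapP => [[v _]] //.
Qed.

Lemma sum_iota_in_range lo hi N :
  (\sum_(x <- iota 0 N) ((lo <= x) && (x < hi)) = minn hi N - lo)%N.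
Proof.
elim: N => [|N IH]; first by rewrite big_nil; lia.
rewrite -addn1 iotaD big_cat big_seq1 IH /=.
by case: (leqP lo N) => ?; case: (ltnP N hi) => ? /=; lia.
Qed.

Lemma split_first_true (s : seq bool) : has id s ->
  exists p s', s = nseq p false ++ true :: s'.
Proof.
elim: s => //= b s IH; case: b => /= [_|/IH [p [s' ->]]]; first by exists 0%N, s.
by exists p.+1, s'.
Qed.

Lemma count_id_eq0 (s : seq bool) : count id s = 0%N -> s = nseq (size s) false.
Proof. by elim: s => //= b s IH; case: b => //= /IH {1}->. Qed.

Lemma sum_nat_andb (T : Type) (r : seq T) (P Q : pred T) :
  (\sum_(x <- r) (P x && Q x) = \sum_(x <- r | P x) Q x)%N.
Proof. by rewrite [RHS]big_mkcond; apply: eq_bigr => x _; case: (P x). Qed.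

Definition two_red_word (p q r : nat) : seq bool :=
  nseq p false ++ true :: nseq q false ++ true :: nseq r false.

Lemma size_two_red_word p q r : size (two_red_word p q r) = (p + q + r + 2)%N.
Proof. rewrite /two_red_word size_cat /= size_cat /= !size_nseq; lia. Qed.

Lemma count_two_red_word p q r : count id (two_red_word p q r) = 2.
Proof.
by rewrite /two_red_word count_cat /= count_cat /= !count_nseq /= !mul0n.
Qed.

Lemma two_red_wordP (w : seq bool) : count id w = 2 ->
  exists p q r, w = two_red_word p q r.
Proof.
move=> cw2; have [p [s1 def_w]] : exists p s1, w = nseq p false ++ true :: s1.
  by apply: split_first_true; rewrite has_count cw2.
have cs1 : count id s1 = 1%N.
  by move: cw2; rewrite def_w count_cat count_nseq /= mul0n => -[].
have [q [s2 def_s1]] : exists q s2, s1 = nseq q false ++ true :: s2.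
  by apply: split_first_true; rewrite has_count cs1.
have cs2 : count id s2 = 0%N.
  by move: cs1; rewrite def_s1 count_cat count_nseq /= mul0n => -[].
by exists p, q, (size s2); rewrite def_w def_s1 {1}(count_id_eq0 cs2).
Qed.

Lemma index_behead_two_red_word q r :
  index true (behead (two_red_word 0 q r)) = q.
Proof. by rewrite /= index_cat mem_nseq andbF size_nseq /= addn0. Qed.

Lemma arrow_vals_nseq_false k p s :
  arrow_vals k (nseq p false ++ s) = nseq p (-1)%R ++ arrow_vals k s.
Proof. by elim: p => //= p ->. Qed.

Lemma arrow_vals_two_red_word k1 k2 p q r :
  arrow_vals [:: k1; k2] (two_red_word p q r) =
  nseq p (-1)%R ++ Posz k1 :: nseq q (-1)%R ++ Posz k2 :: nseq r (-1)%R.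
Proof.
rewrite arrow_vals_nseq_false /= (arrow_vals_nseq_false [:: k2]) /=.
by congr (_ ++ _ :: _ ++ _ :: _); elim: r => //= r ->.
Qed.

Lemma scanl_add_nseq_opp1 (x : int) n :
  scanl (fun a b => a + b)%R x (nseq n (-1)%R) =
  [seq (x - m%:Z)%R | m <- iota 1 n].
Proof.
elim: n x => //= n IH x; rewrite IH (iotaDl 1 1) -map_comp.
by congr (_ :: _); apply: eq_map => m /=; rewrite PoszD opprD addrA.
Qed.

Lemma foldl_add_nseq_opp1 (x : int) n :
  foldl (fun a b => a + b)%R x (nseq n (-1)%R) = (x - n%:Z)%R.
Proof. elim: n x => /= [|n IH] x; rewrite ?IH; lia. Qed.

Lemma ranks_two_red_word k1 k2 p q r :
  let a := (k1%:Z - p%:Z)%R in let b := (a - q%:Z + k2%:Z)%R in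
  ranks [:: k1; k2] (two_red_word p q r) =
  0%R :: [seq (- m%:Z)%R | m <- iota 1 p] ++
   a :: [seq (a - m%:Z)%R | m <- iota 1 q] ++
   b :: [seq (b - m%:Z)%R | m <- iota 1 r].
Proof.
rewrite /ranks arrow_vals_two_red_word.
rewrite scanl_cat scanl_add_nseq_opp1 foldl_add_nseq_opp1 /=.
rewrite scanl_cat scanl_add_nseq_opp1 foldl_add_nseq_opp1 /=.
rewrite -[nseq r _]cats0 scanl_cat scanl_add_nseq_opp1 cats0.
by congr (_ :: _ ++ _ :: _ ++ _ :: _); try apply: eq_map => m /=; lia.
Qed.

Lemma srank0 k w : srank k w 0 = 0%R.
Proof. by []. Qed.

Section TwoPartPaths.
Variables k1 k2 i : nat.
Hypothesis i_le_k1 : (i <= k1)%N.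
Local Notation k := [:: k1; k2].
Local Notation w := (two_red_word 0 i (k1 + k2 - i)).
Local Notation N := (i + (k1 + k2 - i) + 2)%N.

Lemma is_red_path m : is_red w m = (m == 0%N) || (m == i.+1).
Proof.
rewrite /is_red /two_red_word; case: m => [|m] //=.
rewrite nth_cat size_nseq nth_nseq; case: (ltngtP m i) => [|lt_im|->]; try lia.
  by case E: (m - i)%N => [|m'] /=; [lia | rewrite nth_nseq; case: ifP; lia].
by rewrite subnn eqxx.
Qed.

Lemma srank_path m : (0 < m <= i.+1)%N -> srank k w m = (k1%:Z - m.-1%:Z)%R.
Proof.
rewrite /srank ranks_two_red_word; case: m => [|[|m]] //= lt_mi.
rewrite nth_cat size_map size_iota ifT; last lia.
by rewrite (nth_map 0%N) ?size_iota ?nth_iota; lia.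
Qed.

Lemma erank_path0 : erank k w 0 = k1.
Proof. by rewrite /erank -/(srank k w 1) srank_path //; lia. Qed.

Lemma erank_path_second_red : erank k w i.+1 = (k1%:Z - i%:Z + k2%:Z)%R.
Proof.
rewrite /erank ranks_two_red_word /= nth_cat size_map size_iota ltnn subnn /=.
lia.
Qed.

Lemma is_dyck_path : is_dyck k w.
Proof.
rewrite /is_dyck size_two_red_word count_two_red_word ranks_two_red_word /=.
apply/andP; split; first by apply/eqP; lia.
rewrite all_cat /= !all_map; apply/and3P; split; try lia.
all: by apply/allP => m; rewrite mem_iota /=; lia.
Qed.

Lemma sum_over_red (F : nat -> nat) :
  (\sum_(m <- iota 0 N | is_red w m) F m = F 0 + F i.+1)%N.
Proof.
have red_pos : perm_eq [seq m <- iota 0 N | is_red w m] [:: 0%N; i.+1].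
  apply: uniq_perm => [||m]; first by rewrite filter_uniq ?iota_uniq.
    by [].
  by rewrite mem_filter is_red_path mem_iota !inE; lia.
by rewrite -big_filter (perm_big _ red_pos) big_cons big_seq1.
Qed.

Lemma sum_over_red_pairs (P : nat -> nat -> bool) (G : nat -> nat -> nat) :
  (\sum_(x <- iota 0 N) \sum_(j <- iota 0 N |
      [&& is_red w x, is_red w j, x < j & P x j]) G x j
   = if P 0%N i.+1 then G 0%N i.+1 else 0)%N.
Proof.
transitivity (\sum_(x <- iota 0 N | is_red w x) \sum_(j <- iota 0 N | is_red w j)
                (if (x < j) && P x j then G x j else 0))%N.
  rewrite [RHS]big_mkcond; apply: eq_bigr => x _.
  by case: (is_red w x) => /=; [rewrite big_mkcondr | rewrite big_pred0].
by rewrite sum_over_red !sum_over_red !add0n ltnn addn0.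
Qed.

Lemma area_path : area k w = (k1 - i)%N.
Proof.
rewrite /area size_two_red_word add0n sum_over_red srank0.
by rewrite (srank_path (m := i.+1)) //; lia.
Qed.

Lemma dinv_path : dinv k w = if (i < k1)%N then i else k2.
Proof.
have blue_sweeps : (\sum_(x <- iota 0 N) \sum_(j <- iota 0 N)
    [&& ~~ is_red w x, is_red w j, x < j, (srank k w j <= srank k w x)%R
      & (srank k w x <= erank k w j)%R] = minn i k2)%N.
  transitivity (\sum_(x <- iota 0 N)
                  ((maxn 1 (i.+1 - k2) <= x) && (x < i.+1)) : nat)%N;
    last by rewrite sum_iota_in_range; lia.
  apply: eq_bigr => x _; under eq_bigr do rewrite andbCA.
  rewrite sum_nat_andb sum_over_red ltn0 andbF add0n.
  rewrite is_red_path srank_path ?erank_path_second_red ?leqnn //.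
  case: x => [|x] /=; first by rewrite geq_max.
  have [lt_xi|le_ix] := ltnP x i; last by rewrite ltnS ltnNge le_ix !andbF.
  by rewrite srank_path /=; lia.
rewrite /dinv size_two_red_word add0n blue_sweeps !sum_over_red_pairs.
rewrite srank0 srank_path ?erank_path0 ?erank_path_second_red ?leqnn //.
by do 3 case: ifP => ?; lia.
Qed.

End TwoPartPaths.

Lemma mem_dyck_paths_two_parts k1 k2 w :
  (w \in dyck_paths [:: k1; k2]) =
  (w \in [seq two_red_word 0 i (k1 + k2 - i) | i <- iota 0 k1.+1]).
Proof.
rewrite /dyck_paths mem_filter.
apply/andP/mapP => [[/and3P [size_w count_w ranks_w] _]|].
  have [p [q [r {count_w}def_w]]] := two_red_wordP (eqP count_w); subst w.
  rewrite ranks_two_red_word size_two_red_word in ranks_w size_w.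
  case: p ranks_w size_w => [|p] //= ranks_w /eqP size_w.
  move: ranks_w; rewrite all_cat all_map => /andP [/allP ranks_q _].
  have le_qk1 : (q <= k1)%N.
    case: (leqP q k1) => // lt_k1q.
    by have := ranks_q k1.+1; rewrite mem_iota /=; lia.
  by exists q; [rewrite inE mem_iota | congr two_red_word]; lia.
move=> [i]; rewrite mem_iota /= ltnS => le_ik1 ->.
split; first exact: is_dyck_path.
have -> : (k1 + (k2 + 0) + 2 = size (two_red_word 0 i (k1 + k2 - i)))%N.
  by rewrite size_two_red_word; lia.
exact: mem_all_words.
Qed.

Lemma dyck_paths_two_parts k1 k2 : perm_eq (dyck_paths [:: k1; k2])
  [seq two_red_word 0 i (k1 + k2 - i) | i <- iota 0 k1.+1].
Proof.
apply: uniq_perm; last exact: mem_dyck_paths_two_parts.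
  by rewrite filter_uniq ?all_words_uniq.
rewrite map_inj_uniq ?iota_uniq // => x y /(congr1 (index true \o behead)) /=.
by rewrite !index_behead_two_red_word.
Qed.

Lemma sum_dyck_paths_two_parts (R : comNzRingType) k1 k2 (q t : R) :
  (\sum_(w <- dyck_paths [:: k1; k2])
      q ^+ dinv [:: k1; k2] w * t ^+ area [:: k1; k2] w =
   \sum_(0 <= i < k1) q ^+ i * t ^+ (k1 - i) + q ^+ k2)%R.
Proof.
rewrite (perm_big _ (dyck_paths_two_parts k1 k2)) big_map.
rewrite -/(index_iota 0 k1.+1).
rewrite big_nat_recr //= area_path // dinv_path // ltnn subnn mulr1.
congr (_ + _)%R; apply: eq_big_nat => i /andP [_ lt_ik1].
by rewrite area_path ?dinv_path ?lt_ik1 // ltnW.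
Qed.

Definition complete_hom (R : comNzRingType) (n : nat) (q t : R) : R :=
  (\sum_(0 <= i < n.+1) q ^+ i * t ^+ (n - i))%R.

Lemma complete_homE (R : comNzRingType) n (q t : R) :
  complete_hom n q t = (\sum_(0 <= i < n) q ^+ i * t ^+ (n - i) + q ^+ n)%R.
Proof. by rewrite /complete_hom big_nat_recr //= subnn mulr1. Qed.

Lemma complete_homC (R : comNzRingType) n (q t : R) :
  complete_hom n q t = complete_hom n t q.
Proof.
rewrite /complete_hom big_nat_rev; apply: eq_big_nat => i /andP [_ lt_in].
by rewrite add0n subSS subKn 1?mulrC.
Qed.

Lemma permutations_pair (T : eqType) (a b : T) : permutations [:: a; b] =
  if a == b then [:: [:: a; a]] else [:: [:: a; b]; [:: b; a]].
Proof.
rewrite /permutations /tally /= /incr_tally /=.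
by case: eqVneq => [->|]; rewrite ?eqxx // eq_sym => /negbTE ->.
Qed.

Lemma C_lam_pair (R : comNzRingType) a b (q t : R) : C_lam [:: a; b] q t =
  if a == b then complete_hom a q t
  else (complete_hom a q t + complete_hom b q t)%R.
Proof.
rewrite /C_lam permutations_pair !complete_homE.
case: eqVneq => [->|_];
  rewrite !big_cons big_nil !addr0 !sum_dyck_paths_two_parts //.
by rewrite addrACA [in RHS]addrACA (addrC (q ^+ b)%R).
Qed.

Theorem mainTheorem3 (R : comNzRingType) (lam : seq nat) :
  is_partition lam -> size lam = 2 ->
  forall q t : R, C_lam lam q t = C_lam lam t q.
Proof.
(* The order of the parts is irrelevant: C_lam sums over all rearrangements. *)
move=> _ size_lam q t; case: lam size_lam => [|a [|b []]] // _.
by rewrite !C_lam_pair (complete_homC a) (complete_homC b).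
Qed.
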